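(* Let $\bar P=\prod_{x\in\mathbb Z}\bar P_x$ be a product probability measure on $\Omega=\mathbb R^{\mathbb Z}$ and suppose the law $\bar P_0$ of $\omega_0$ is symmetric ($\omega_0$ and $-\omega_0$ have the same distribution). Then for every $n\ge0$ and $x\in\mathbb Z$, $$\mathbb P_n(X_n=x)=P^{\mathbf 0}_n(X_n=x),$$ where $\mathbb P_n(X_n=x)=\int_\Omega P^{\omega}_n(X_n=x)\,\bar P(d\omega)$ and $P^{\mathbf 0}_n$ is the quenched law for $\omega\equiv0$ (the Hadamard walk started from $\varphi_*$).
   Context: $U_x=\frac{1}{\sqrt2}\begin{pmatrix} e^{i\omega_x} & 1\\ 1 & -e^{-i\omega_x}\end{pmatrix}=\begin{pmatrix} a_x & b_x\\ c_x & d_x\end{pmatrix}$, $P_x=\begin{pmatrix} a_x & b_x\\ 0&0\end{pmatrix}$, $Q_x=\begin{pmatrix} 0&0\\ c_x & d_x\end{pmatrix}$. $\Xi_0(0,0)=I$, $\Xi_n(l,m)=0$ if $l<0$ or $m<0$, and $\Xi_{n+1}(l,m)=P_{x+1}\Xi_n(l-1,m)+Q_{x-1}\Xi_n(l,m-1)$ for $l,m\ge0$, $l+m=n+1$, $x=-l+m$. With $\varphi_*={}^T[1/\sqrt2,i/\sqrt2]$, $P^{\omega}_n(X_n=x)=\|\Xi_n(l,m)\varphi_*\|^2$ for $x=-l+m$, $n=l+m$, $l,m\ge0$ (zero otherwise). *)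

From HB Require Import structures.
From mathcomp Require Import all_boot all_order all_algebra.
From mathcomp Require Import all_classical all_reals all_analysis.
From mathcomp Require Import complex.
Set Implicit Arguments. Unset Strict Implicit. Unset Printing Implicit Defensive.
Import Order.TTheory GRing.Theory Num.Theory.
Local Open Scope classical_set_scope.
Local Open Scope ring_scope.

Section QW.
Variable R : realType.
Local Open Scope complex_scope.

Definition expi (t : R) : R[i] := (cos t) +i* (sin t).
Definition isqrt2 : R[i] := ((Num.sqrt 2)^-1)%:C.

Definition Umat (w : R) : 'M[R[i]]_2 :=
  \matrix_(i < 2, j < 2)
    (if (i == 0) && (j == 0) then expi w * isqrt2
     else if (i == 1) && (j == 1) then - (expi (- w)) * isqrt2
     else isqrt2).

Definition Pmat (w : R) : 'M[R[i]]_2 :=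
  \matrix_(i < 2, j < 2) (if i == 0 then Umat w i j else 0).
Definition Qmat (w : R) : 'M[R[i]]_2 :=
  \matrix_(i < 2, j < 2) (if i == 1 then Umat w i j else 0).

(* Xi_n(l,m); returns 0 when l + m <> n (the path-sum is only used for l+m = n) *)
Fixpoint Xi (om : int -> R) (n l m : nat) : 'M[R[i]]_2 :=
  match n with
  | 0 => if (l == 0)%N && (m == 0)%N then 1%:M else 0
  | n'.+1 =>
      if (l + m == n'.+1)%N then
        let x : int := (m%:Z - l%:Z)%R in
        (if (0 < l)%N then Pmat (om (x + 1)) *m Xi om n' l.-1 m else 0)
        + (if (0 < m)%N then Qmat (om (x - 1)) *m Xi om n' l m.-1 else 0)
      else 0
  end.

Definition phistar : 'cV[R[i]]_2 :=
  \col_(i < 2) (if i == 0 then isqrt2 else 'i * isqrt2).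

Definition sqnorm (z : R[i]) : R := let: a +i* b := z in a ^+ 2 + b ^+ 2.
Definition vnorm2 (v : 'cV[R[i]]_2) : R := \sum_(i < 2) sqnorm (v i 0).

(* quenched probability P^omega_n(X_n = x): the unique (l,m) with l+m=n, -l+m=x,
   or 0 if no such pair exists *)
Definition Pquenched (om : int -> R) (n : nat) (x : int) : R :=
  \sum_(l < n.+1)
     (if ((n - l)%:Z - l%:Z == x)%R then vnorm2 (Xi om n l (n - l) *m phistar)
      else 0).

End QW.

(* Omega = R^Z (an alias of int -> R, equipped with a trivial point so that the
   library's generated-sigma-algebra construction applies). *)
Definition RZ (R : realType) := (int -> R)%type.
HB.instance Definition _ (R : realType) := Choice.on (RZ R).
HB.instance Definition _ (R : realType) := isPointed.Build (RZ R) (fun=> 0%R).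

Definition cylinders (R : realType) : set (set (RZ R)) :=
  [set (fun om : RZ R => om x) @^-1` A | x in [set: int] & A in measurable].

Definition Omega (R : realType) := g_sigma_algebraType (@cylinders R).

Section Prod.
Variable R : realType.

(* P is the product measure prod_x mu_x: for every finite family of distinct
   sites and Borel sets, the joint probability factorizes. *)
Definition is_product_measure (P : probability (Omega R) R)
    (mu : int -> probability R R) : Prop :=
  forall (s : seq int) (A : int -> set R), uniq s ->
    (forall x, measurable (A x)) ->
    P [set om : Omega R | forall x, x \in s -> A x (om x)] =
    (\prod_(x <- s) mu x (A x))%E.

Definition symmetric_law (m : probability R R) : Prop :=
  forall A : set R, measurable A -> m ((fun r : R => - r) @^-1` A) = m A.

End Prod.

(* Conjugating the transfer matrices by diagonal phase matrices (a discrete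
   gauge transformation) removes the environment from every coin; what remains
   of [om] is only the phase [om 0] acting on the initial state.  Since the
   Hadamard amplitudes are real, the quenched probability is then
   [P^0_n(X_n = x) + K sin (om 0)] for a constant [K], and the odd term
   [sin (om 0)] averages to zero under a symmetric law of [om 0]. *)
From HB Require Import structures.
From mathcomp Require Import all_boot all_order all_algebra.
From mathcomp Require Import all_classical all_reals all_analysis.
From mathcomp Require Import complex spectral ring lra zify.
From mathcomp Require Import measurable_realfun.
Set Implicit Arguments. Unset Strict Implicit. Unset Printing Implicit Defensive.
Import Order.TTheory GRing.Theory Num.Theory.
Local Open Scope classical_set_scope.
Local Open Scope ring_scope.

Section Gauge.
Variable R : realType.
Local Open Scope complex_scope.

Lemma expiD (a b : R) : expi a * expi b = expi (a + b).
Proof. by rewrite /expi; simpc; rewrite cosD sinD; congr (_ +i* _); ring. Qed.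

Lemma expi0 : expi (0 : R) = 1.
Proof. by rewrite /expi cos0 sin0. Qed.

Lemma sqnorm_expiMl (a : R) (z : R[i]) : sqnorm (expi a * z) = sqnorm z.
Proof.
case: z => x y; rewrite /expi; simpc => /=.
transitivity ((cos a ^+ 2 + sin a ^+ 2) * (x ^+ 2 + y ^+ 2)); first ring.
by rewrite cos2Dsin2 mul1r.
Qed.

Definition gauge_mx (t w : R) : 'M[R[i]]_2 :=
  \matrix_(i < 2, j < 2)
    (if i == j then (if i == 0 then expi (- t) else expi (w - t)) else 0).

Ltac mx2_entries :=
  apply/matrixP; do 2 case=> [[|[|//]] ?];
  rewrite !mxE !big_ord_recl !big_ord0 !mxE /= ?mxE /=;
  rewrite ?mulr0 ?mul0r ?addr0 ?add0r //.

Lemma Pmat_gauge (t w w' : R) :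
  Pmat w *m gauge_mx (t + w) w = gauge_mx t w' *m Pmat 0.
Proof.
mx2_entries.
- by rewrite mulrAC expiD expi0 mul1r; congr (expi _ * _); ring.
- by rewrite mulrC; congr (expi _ * _); ring.
Qed.

Lemma Qmat_gauge (t w w' : R) :
  Qmat w *m gauge_mx t w = gauge_mx (t + w') w' *m Qmat 0.
Proof.
mx2_entries.
- by rewrite mulrC; congr (expi _ * _); ring.
- have -> : w' - (t + w') = - w + (w - t) by ring.
  by rewrite -(expiD (- w)) oppr0 expi0; ring.
Qed.

Lemma gauge_mx0K (w : R) : gauge_mx 0 w *m gauge_mx 0 (- w) = 1%:M.
Proof.
mx2_entries; rewrite ?oppr0 ?subr0 ?expi0 ?mulr1 //.
by rewrite !addr0 expiD subrr expi0.
Qed.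

Lemma vnorm2_gauge (t w : R) (v : 'cV[R[i]]_2) :
  vnorm2 (gauge_mx t w *m v) = vnorm2 v.
Proof.
rewrite /vnorm2 !big_ord_recl !big_ord0 !mxE !big_ord_recl !big_ord0 !mxE /=.
by rewrite !mul0r !addr0 add0r !sqnorm_expiMl.
Qed.

(* A discrete primitive of [om], normalised at [0]. *)
Definition potential (om : int -> R) (x : int) : R :=
  match x with
  | Posz k => \sum_(1 <= i < k.+1) om i%:Z
  | Negz k => - \sum_(0 <= i < k.+1) om (- i%:Z)
  end.

Lemma potential0 (om : int -> R) : potential om 0 = 0.
Proof. by rewrite /= big_geq. Qed.

Lemma potentialS (om : int -> R) (x : int) :
  potential om (x + 1) = potential om x + om (x + 1).
Proof.
case: x => [k|[|k]].
- by rewrite -PoszD addn1 /= big_nat_recr.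
- by rewrite potential0 /= big_nat1 oppr0 addNr.
- have -> : Negz k.+1 + 1 = Negz k by rewrite !NegzE; lia.
  by rewrite /= (big_nat_recr k.+1) //= NegzE; ring.
Qed.

Lemma potentialB1 (om : int -> R) (x : int) :
  potential om x = potential om (x - 1) + om x.
Proof. by rewrite -{1 3}(subrK 1 x) potentialS. Qed.

(* Conjugation by [gauge_mx (potential om x) (om x)] at site [x] turns the
   coins [P_x], [Q_x] into the Hadamard ones [Pmat 0], [Qmat 0]. *)
Lemma Xi_gauge (om : int -> R) (n l m : nat) :
  Xi om n l m = gauge_mx (potential om (m%:Z - l%:Z)) (om (m%:Z - l%:Z))
                  *m Xi (fun=> 0) n l m *m gauge_mx 0 (- om 0).
Proof.
elim: n l m => [|n IHn] l m /=.
  case: ifP => [/andP[/eqP -> /eqP ->]|_]; last by rewrite mulmx0 mul0mx.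
  by rewrite subrr potential0 mulmx1 gauge_mx0K.
case: ifP => _; last by rewrite mulmx0 mul0mx.
rewrite mulmxDr mulmxDl; congr (_ + _).
  case: l => [|l] /=; first by rewrite mulmx0 mul0mx.
  have x_succ : m%:Z - l%:Z = (m%:Z - l.+1%:Z) + 1 by lia.
  by rewrite IHn x_succ !mulmxA potentialS (Pmat_gauge _ _ (om (m%:Z - l.+1%:Z))).
case: m => [|m] /=; first by rewrite mulmx0 mul0mx.
have x_pred : m%:Z - l%:Z = (m.+1%:Z - l%:Z) - 1 by lia.
rewrite IHn x_pred !mulmxA [potential om (m.+1%:Z - l%:Z)]potentialB1.
by rewrite (Qmat_gauge _ _ (om (m.+1%:Z - l%:Z))).
Qed.

Lemma isqrt2_real : isqrt2 R \is Num.real.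
Proof. by rewrite complex_real. Qed.

Lemma Pmat0_real : Pmat (0 : R) \is a realmx.
Proof.
apply/mxOverP; do 2 case=> [[|[|//]] ?]; rewrite !mxE /= ?rpred0 //.
- by rewrite expi0 mul1r isqrt2_real.
- exact: isqrt2_real.
Qed.

Lemma Qmat0_real : Qmat (0 : R) \is a realmx.
Proof.
apply/mxOverP; do 2 case=> [[|[|//]] ?]; rewrite !mxE /= ?rpred0 //.
- exact: isqrt2_real.
- by rewrite oppr0 expi0 mulN1r rpredN isqrt2_real.
Qed.

Lemma Xi_Hadamard_real (n l m : nat) :
  Xi (fun=> 0 : R) n l m \is a realmx.
Proof.
have real0 k k' : (0 : 'M[R[i]]_(k, k')) \is a realmx by rewrite mxOver0.
elim: n l m => [|n IHn] l m /=.
  by case: ifP => _; rewrite ?real0 ?mxOver_scalar.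
case: ifP => _; rewrite ?real0 // realmxD //.
  by case: (0 < l)%N; rewrite ?real0 ?mxOverM ?Pmat0_real.
by case: (0 < m)%N; rewrite ?real0 ?mxOverM ?Qmat0_real.
Qed.

Definition cross_term (A : 'M[R[i]]_2) : R :=
  complex.Re (A 0 0 * A 0 1 + A 1 0 * A 1 1).

Lemma vnorm2_real_phase (A : 'M[R[i]]_2) (w : R) :
  A \is a realmx ->
  vnorm2 (A *m (gauge_mx 0 (- w) *m phistar R))
    = vnorm2 (A *m phistar R) + cross_term A * sin w.
Proof.
move=> /mxOverP A_real.
have /complex_realP[a Ea] := A_real 0 0.
have /complex_realP[b Eb] := A_real 0 1.
have /complex_realP[c Ec] := A_real 1 0.
have /complex_realP[d Ed] := A_real 1 1.
have lift01 : lift ord0 ord0 = 1 :> 'I_2 by apply: val_inj.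
rewrite /vnorm2 /cross_term !big_ord_recl !big_ord0 !mxE.
rewrite !big_ord_recl !big_ord0 !mxE /= !lift01 Ea Eb Ec Ed.
rewrite !big_ord_recl !big_ord0 !mxE /= ?lift01 /expi /isqrt2 /=.
rewrite !oppr0 !addr0 cos0 sin0 cosN sinN.
have half : 2 * (Num.sqrt 2)^-1 ^+ 2 = 1 :> R.
  by rewrite exprVn sqr_sqrtr ?mulfV ?pnatr_eq0.
apply/eqP; rewrite -subr_eq0; apply/eqP.
transitivity ((Num.sqrt 2)^-1 ^+ 2 * (b ^+ 2 + d ^+ 2) * (cos w ^+ 2 + sin w ^+ 2 - 1)
  + (2 * (Num.sqrt 2)^-1 ^+ 2 - 1) * (a * b + c * d) * sin w); first ring.
by rewrite cos2Dsin2 half !subrr !mulr0 !mul0r addr0.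
Qed.

Lemma vnorm2_Xi_phistar (om : int -> R) (n l m : nat) :
  vnorm2 (Xi om n l m *m phistar R)
    = vnorm2 (Xi (fun=> 0) n l m *m phistar R)
      + cross_term (Xi (fun=> 0) n l m) * sin (om 0).
Proof.
rewrite Xi_gauge -!mulmxA vnorm2_gauge.
exact/vnorm2_real_phase/Xi_Hadamard_real.
Qed.

Lemma Pquenched_sin (n : nat) (x : int) : exists K : R, forall om : int -> R,
  Pquenched om n x = Pquenched (fun=> 0) n x + K * sin (om 0).
Proof.
exists (\sum_(l < n.+1) if (n - l)%:Z - l%:Z == x
                       then cross_term (Xi (fun=> 0) n l (n - l)) else 0).
move=> om; rewrite /Pquenched mulr_suml -big_split; apply: eq_bigr => l _ /=.
by case: ifP => _; rewrite ?(vnorm2_Xi_phistar om) ?mul0r ?addr0.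
Qed.

Lemma sqnorm_ge0 (z : R[i]) : 0 <= sqnorm z.
Proof. by case: z => a b; rewrite addr_ge0 ?sqr_ge0. Qed.

Lemma Pquenched_ge0 (om : int -> R) (n : nat) (x : int) : 0 <= Pquenched om n x.
Proof.
rewrite /Pquenched sumr_ge0 // => l _; case: ifP => // _.
by rewrite /vnorm2 sumr_ge0 // => i _; exact: sqnorm_ge0.
Qed.

End Gauge.

Section Averaging.
Variable R : realType.
Local Open Scope ereal_scope.

Lemma measurable_site (y : int) : measurable_fun setT (fun om : Omega R => om y).
Proof.
move=> _ A mA; rewrite setTI.
by apply: sub_sigma_algebra; exists y => //; exists A.
Qed.

Lemma site_law (P : probability (Omega R) R) (mu : int -> probability R R)
    (y : int) (A : set R) :
  is_product_measure P mu -> measurable A ->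
  pushforward P (fun om : Omega R => om y) A = mu y A.
Proof.
move=> P_prod mA; have := P_prod [:: y] (fun=> A) erefl (fun=> mA).
rewrite big_seq1 => <-; congr (P _); apply/seteqP; split => om /=.
  by move=> Aom z; rewrite mem_seq1 => /eqP ->.
by apply; rewrite mem_seq1.
Qed.

Lemma integral_site (P : probability (Omega R) R) (mu : int -> probability R R)
    (y : int) (f : R -> \bar R) :
  is_product_measure P mu -> measurable_fun setT f -> (forall t, 0 <= f t) ->
  \int[P]_(om in setT) f (om y) = \int[mu y]_(t in setT) f t.
Proof.
move=> P_prod f_mes f_ge0.
rewrite -(preimage_setT (fun om : Omega R => om y)).
have site_mes := measurable_site y.
rewrite -ge0_integral_pushforward //.
by apply: (eq_measure_integral (mu y)) => A mA _; exact: site_law.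
Qed.

Lemma integral_symmetric (m : probability R R) (f : R -> \bar R) :
  symmetric_law m -> measurable_fun setT f -> (forall t, 0 <= f t) ->
  \int[m]_(t in setT) f (- t)%R = \int[m]_(t in setT) f t.
Proof.
move=> m_sym f_mes f_ge0.
have opp_mes : measurable_fun setT (fun t : R => - t)%R by exact: oppr_measurable.
rewrite -(preimage_setT (fun t : R => (- t)%R)).
rewrite -ge0_integral_pushforward //.
by apply: (eq_measure_integral m) => A mA _; exact: m_sym.
Qed.

(* Averaging [g t] and [g (- t)], which have the same integral. *)
Lemma integral_symmetric_even_part (m : probability R R) (g : R -> R) (c : R) :
  symmetric_law m -> measurable_fun setT g -> (forall t, (0 <= g t)%R) ->
  (forall t, g t + g (- t) = c *+ 2)%R ->
  \int[m]_(t in setT) (g t)%:E = c%:E.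
Proof.
move=> m_sym g_mes g_ge0 g_even.
have Eg_mes : measurable_fun setT (EFin \o g) by exact/measurable_EFinP.
have Eg_ge0 t : 0 <= (EFin \o g) t by rewrite /= lee_fin.
have twice : \int[m]_(t in setT) (g t)%:E + \int[m]_(t in setT) (g t)%:E
             = (c *+ 2)%:E.
  rewrite -{2}(integral_symmetric m_sym Eg_mes Eg_ge0).
  rewrite -ge0_integralD //=; try by move=> t _; rewrite lee_fin.
    under eq_integral do rewrite -EFinD g_even.
    rewrite integral_cst // [X in _ * X](_ : _ = 1) ?mule1 //.
    exact: probability_setT.
  have opp_mes : measurable_fun setT (fun t : R => - t)%R by exact: oppr_measurable.
  exact: measurableT_comp Eg_mes opp_mes.
move: twice; case: (\int[m]_(t in setT) _) => [r||] //= [r_twice].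
by congr EFin; lra.
Qed.

End Averaging.

Theorem mainTheorem7 (R : realType) (P : probability (Omega R) R)
    (mu : int -> probability R R) :
  is_product_measure P mu ->
  symmetric_law (mu 0) ->
  forall (n : nat) (x : int),
    (\int[P]_(om in [set: Omega R]) (Pquenched om n x)%:E)%E =
    (Pquenched (fun=> 0) n x)%:E.
Proof.
move=> P_prod mu0_sym n x.
have [K Pq_sin] := Pquenched_sin R n x.
pose g t := Pquenched (fun=> 0) n x + K * sin t.
have g_ge0 t : 0 <= g t by rewrite /g -(Pq_sin (fun=> t)) Pquenched_ge0.
have g_mes : measurable_fun setT g.
  apply: (measurable_funD (f := cst _)) => //.
  apply: (measurable_funM (f := cst K) (g := sin)) => //.
  by apply: continuous_measurable_fun; exact: continuous_sin.
under eq_integral do rewrite Pq_sin.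
rewrite (integral_site 0 (f := EFin \o g) P_prod) //=; last exact/measurable_EFinP.
apply: integral_symmetric_even_part => // t.
by rewrite /g sinN mulrN addrACA subrr addr0 mulr2n.
Qed.
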